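(* Let $r\geq1$ be odd, $m\geq 3$, $n=(r+1)m$, let $u$ be an integer with $\gcd(u,2^m-1)=1$, let $\alpha$ be a primitive element of $\mathbb{F}_{2^{rm}}$, and let $0\leq s,l\leq 2^{rm}-2$ be integers. For $0\le k\le 2^{rm}-2$ let $\Delta_k=\{\alpha^i\mid k\leq i\leq k+2^{rm-1}-1\}$. Let $F\colon\mathbb{F}_{2^{rm}}\times\mathbb{F}_{2^m}\to\mathbb{F}_2$ be the Boolean function with $$\mathrm{supp}(F)=\{(\gamma y^u,y)\mid y\in\mathbb{F}_{2^m}^*,\ \gamma\in\Delta_s\}\cup\{(\gamma,0)\mid\gamma\in\Delta_l\}.$$ Then $F$ is balanced.
   Context: $\mathbb{F}_{2^{rm}}\times\mathbb{F}_{2^m}$ is viewed as an $n$-dimensional $\mathbb{F}_2$-vector space ($\mathbb{F}_{2^m}\subseteq\mathbb{F}_{2^{rm}}$). An $n$-variable Boolean function is balanced if its support has exactly $2^{n-1}$ elements. *)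

From HB Require Import structures.
From mathcomp Require Import all_boot all_order all_algebra all_field.
Set Implicit Arguments. Unset Strict Implicit. Unset Printing Implicit Defensive.
Import GRing.Theory Num.Theory.
Local Open Scope ring_scope.

Definition subF (L : finFieldType) (m : nat) : {set L} :=
  [set y : L | y ^+ (2 ^ m)%N == y].
Definition subFstar (L : finFieldType) (m : nat) : {set L} :=
  [set y : L | (y != 0) && (y \in subF L m)].

Definition Delta (L : finFieldType) (N : nat) (alpha : L) (k : nat) : {set L} :=
  [set alpha ^+ (k + i)%N | i : 'I_(2 ^ N.-1)].

Definition suppF (L : finFieldType) (r m : nat) (u : int) (alpha : L)
  (s l : nat) : {set L * L} :=
  [set (g * y ^ u, y) | g in Delta (r * m) alpha s, y in subFstar L m]
  :|: [set (g, 0) | g in Delta (r * m) alpha l].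

Definition Ffun (L : finFieldType) (r m : nat) (u : int) (alpha : L)
  (s l : nat) : L * L -> bool := fun p => p \in suppF r m u alpha s l.

Definition balanced (T : finType) (n : nat) (f : T -> bool) : Prop :=
  #|[set x | f x]| = (2 ^ n.-1)%N.

From HB Require Import structures.
From mathcomp Require Import all_boot all_order all_algebra all_field.
From mathcomp Require Import zify.
Set Implicit Arguments. Unset Strict Implicit. Unset Printing Implicit Defensive.
Import GRing.Theory Num.Theory.
Local Open Scope ring_scope.

(* The two pieces of the support are disjoint, since the second coordinate is
   nonzero on the first and zero on the second, and the first piece is an
   injective image of Delta_s x F_{2^m}^*, as y determines gamma from
   gamma y^u.  Both Delta's are windows of 2^(rm-1) consecutive powers of
   alpha, and F_{2^m}^* is the group of (2^m-1)-th roots of unity, which has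
   2^m - 1 elements because 2^m - 1 divides the order 2^(rm) - 1 of alpha.
   Hence |supp F| = 2^(rm-1) (2^m - 1) + 2^(rm-1) = 2^(n-1). *)

Lemma subn1_dvd_expn_subn1 (x r : nat) : (x - 1 %| x ^ r - 1)%N.
Proof.
case: x => [|x]; first by case: r => [|r]; rewrite ?expn0 ?exp0n.
rewrite -eqn_mod_dvd ?expn_gt0 // -modnXm.
have -> : (x.+1 %% (x.+1 - 1) = 1 %% (x.+1 - 1))%N.
  by apply/eqP; rewrite eqn_mod_dvd.
by rewrite modnXm exp1n.
Qed.

Section PrimitiveRootPowers.

Variable F : finFieldType.

Lemma card_prim_root_window (n : nat) (z : F) (k j : nat) :
  n.-primitive_root z -> (j <= n)%N -> #|[set z ^+ (k + i) | i : 'I_j]| = j.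
Proof.
move=> prim_z le_jn; rewrite card_imset ?card_ord // => i i' /eqP.
rewrite (eq_prim_root_expr prim_z) eqn_modDl.
by rewrite !modn_small ?(leq_trans _ le_jn) // => /eqP /val_inj.
Qed.

Lemma card_unity_roots (n : nat) (z : F) (d : nat) :
  n.-primitive_root z -> (d %| n)%N -> #|[set y : F | d.-unity_root y]| = d.
Proof.
move=> prim_z dvd_dn; have prim_w := dvdn_prim_root prim_z dvd_dn.
set w := z ^+ _ in prim_w.
rewrite -[RHS](card_prim_root_window 0 prim_w (leqnn d)).
apply: eq_card => y; rewrite !inE unity_rootE; apply/eqP/imsetP.
- by move=> /(prim_rootP prim_w) [i ->]; exists i.
- by move=> [i _ ->]; rewrite add0n exprAC (prim_expr_order prim_w) expr1n.
Qed.

End PrimitiveRootPowers.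

Lemma subFstar_unity_roots (L : finFieldType) (m : nat) :
  (0 < m)%N -> subFstar L m = [set y : L | (2 ^ m - 1).-unity_root y].
Proof.
move=> m_gt0; have k_gt0 : (0 < 2 ^ m - 1)%N by rewrite subn_gt0 -(expn0 2) ltn_exp2l.
have two_m : (2 ^ m = (2 ^ m - 1).+1)%N by rewrite subn1 prednK ?expn_gt0.
apply/setP => y; rewrite !inE unity_rootE.
have [-> | y_neq0] /= := eqVneq y 0; first by rewrite expr0n gtn_eqF // eq_sym oner_eq0.
by rewrite {1}two_m exprSr -[X in _ == X]mul1r (inj_eq (mulIf y_neq0)).
Qed.

Lemma card_subFstar (L : finFieldType) (r m : nat) (alpha : L) :
  (0 < m)%N -> (2 ^ (r * m) - 1).-primitive_root alpha ->
  #|subFstar L m| = (2 ^ m - 1)%N.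
Proof.
move=> m_gt0 prim_alpha; rewrite subFstar_unity_roots //.
by apply: (card_unity_roots prim_alpha); rewrite mulnC expnM subn1_dvd_expn_subn1.
Qed.

Lemma card_Delta (L : finFieldType) (N : nat) (alpha : L) (k : nat) :
  (2 ^ N - 1).-primitive_root alpha -> #|Delta N alpha k| = (2 ^ N.-1)%N.
Proof.
move=> prim_alpha; apply: (card_prim_root_window k prim_alpha).
case: N prim_alpha => [/prim_order_gt0 | N _] //=.
by rewrite expnS mul2n -addnn -addnBA ?expn_gt0 // leq_addr.
Qed.

Lemma card_suppF (L : finFieldType) (r m : nat) (u : int) (alpha : L) (s l : nat) :
  #|suppF r m u alpha s l| =
  (#|Delta (r * m) alpha s| * #|subFstar L m| + #|Delta (r * m) alpha l|)%N.
Proof.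
rewrite /suppF cardsU.
have disjoint_pieces :
    [set (g * y ^ u, y) | g in Delta (r * m) alpha s, y in subFstar L m]
    :&: [set (g, 0) | g in Delta (r * m) alpha l] = set0.
  apply/setP => [[a b]]; rewrite !inE; apply/negP.
  move=> /andP [/imset2P [g y _ y_in [_ b_y]] /imsetP [g' _ [_ b0]]].
  by move: y_in; rewrite /subFstar inE -b_y b0 eqxx.
rewrite disjoint_pieces cards0 subn0 curry_imset2X card_in_imset; last first.
  move=> [g y] [g' y']; rewrite !inE /= => /andP [_ /andP [y_neq0 _]] _ [+ y_y'].
  by rewrite -y_y' => /(mulIf (expfz_neq0 u y_neq0)) ->.
by rewrite cardsX [#|[set (_, 0) | _ in _]|]card_imset // => g g' [].
Qed.

Theorem theorem3 (r m : nat) (u : int) (L : finFieldType) (alpha : L) (s l : nat) :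
  odd r -> (1 <= r)%N -> (3 <= m)%N ->
  #|L| = (2 ^ (r * m))%N ->
  coprimez u (2 ^ m - 1)%N%:Z ->
  (2 ^ (r * m) - 1)%N.-primitive_root alpha ->
  (s <= 2 ^ (r * m) - 2)%N -> (l <= 2 ^ (r * m) - 2)%N ->
  balanced ((r + 1) * m)%N (Ffun r m u alpha s l).
Proof.
move=> _ r_gt0 m_ge3 _ _ prim_alpha _ _.
have m_gt0 : (0 < m)%N by apply: leq_trans m_ge3.
have rm_gt0 : (0 < r * m)%N by rewrite muln_gt0 r_gt0.
rewrite /balanced cardsE card_suppF !card_Delta // (card_subFstar m_gt0 prim_alpha).
rewrite -mulnSr subn1 prednK ?expn_gt0 // -expnD.
by congr (2 ^ _)%N; rewrite mulnDl mul1n; lia.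
Qed.
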